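(* For each $n\ge0$, the map $\psi:\mathcal{D}_n\to\mathfrak{S}_n(321)$ is a bijection satisfying $(\mathrm{hill}(D),\mathrm{seg}(D),\mathrm{lseg}(D))=(\mathrm{fix}(\psi(D)),\mathrm{des}(\psi(D)),\mathrm{ldes}(\psi(D))+1)$ for every $D\in\mathcal{D}_n$.
   Context: A Dyck path of semilength $n$ is a lattice path from $(0,0)$ to $(n,n)$ with east steps $(1,0)$ and north steps $(0,1)$ never passing above the line $y=x$; it is encoded as $D=d_1d_2\cdots d_n$ where $d_i$ is the number of north steps before the $i$-th east step. $\mathcal{D}_n$ is the set of Dyck paths of semilength $n$. Statistics: $\mathrm{hill}(D)$ is the number of east steps that touch the diagonal $y=x$ and are immediately followed by a north step; a segment is a maximal string of at least two consecutive east steps of the same height, and $\mathrm{seg}(D)$ is the number of segments; $\mathrm{lseg}(D)=i$ if the $i$-th east step is the last step of the leftmost segment of $D$, while $\mathrm{lseg}(D)=n+1$ if $D$ has no segment (i.e. $D=01\cdots(n-1)$; in particular the empty path has $\mathrm{lseg}=1$). $\mathfrak{S}_n(321)$ is the set of permutations of $[n]$ with no $i<j<l$ and $\pi_i>\pi_j>\pi_l$. For $\pi\in\mathfrak{S}_n$: $\mathrm{fix}(\pi)=|\{i:\pi_i=i\}|$, $\mathrm{des}(\pi)=|\{i:\pi_i>\pi_{i+1}\}|$, $\mathrm{ldes}(\pi)=\min\{i:\pi_i>\pi_{i+1}\text{ or }i=n\}$ (with $\mathrm{ldes}=0$ for the empty permutation). The map $\psi$ (Krattenthaler's bijection): for $D=d_1\cdots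 d_n$, $\psi(D)=\pi_1\cdots\pi_n$ where $\pi_i=d_i+1$ if $i=n$ or $d_i\ne d_{i+1}$; otherwise, if $i$ is the $j$-th smallest element of $\{l\in[n-1]:d_l=d_{l+1}\}$, then $\pi_i$ is the $j$-th smallest element of $[n]\setminus\{d_1+1,\dots,d_n+1\}$. *)

(* Sequences are 0-indexed in Rocq; the paper's 1-indexed
   d_i / pi_i is nth 0 s (i-1). *)
From mathcomp Require Import all_boot.
Set Implicit Arguments. Unset Strict Implicit. Unset Printing Implicit Defensive.

(* D = d_1 ... d_n is a Dyck path of semilength n: lattice path (0,0)->(n,n),
   east/north steps, never above y=x.  In terms of d: d weakly increasing and
   d_i <= i-1 (1-indexed). *)
Definition is_dyck (n : nat) (d : seq nat) : bool :=
  (size d == n) && sorted leq d && all (fun i => nth 0 d i <= i) (iota 0 n).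

(* hill: east step i (1-indexed) starts at (i-1, d_i); it touches y=x iff
   d_i = i-1, and it is immediately followed by a north step iff i = n
   (the path must still climb to (n,n)) or d_{i+1} > d_i. *)
Definition hill (d : seq nat) : nat :=
  let n := size d in
  count (fun i => (nth 0 d i == i) &&
                  ((i.+1 == n) || (nth 0 d i < nth 0 d i.+1))) (iota 0 n).

(* seg: number of maximal runs of >= 2 equal consecutive entries; counted by
   their starting positions. *)
Definition seg (d : seq nat) : nat :=
  let n := size d in
  count (fun i => (nth 0 d i == nth 0 d i.+1) &&
                  ((i == 0) || (nth 0 d i.-1 != nth 0 d i))) (iota 0 n.-1).

(* lseg: 1-indexed position of the last east step of the leftmost segment,
   or n+1 if there is no segment. *)
Definition lseg (d : seq nat) : nat :=
  let n := size d in
  let a := find (fun i => nth 0 d i == nth 0 d i.+1) (iota 0 n.-1) in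
  if a == n.-1 then n.+1
  else (find (fun j => (a <= j) && ((j.+1 == n) || (nth 0 d j != nth 0 d j.+1)))
             (iota 0 n)).+1.

(* Permutations of [n] written in one-line notation as sequences of values in
   1..n. *)
Definition is_perm (n : nat) (p : seq nat) : bool := perm_eq p (iota 1 n).

Definition avoids321 (p : seq nat) : Prop :=
  ~ exists i j l, [/\ i < j, j < l, l < size p,
                     nth 0 p i > nth 0 p j & nth 0 p j > nth 0 p l].

Definition is_perm321 (n : nat) (p : seq nat) : Prop := is_perm n p /\ avoids321 p.

Definition fixp (p : seq nat) : nat :=
  count (fun i => nth 0 p i == i.+1) (iota 0 (size p)).

Definition des (p : seq nat) : nat :=
  count (fun i => nth 0 p i > nth 0 p i.+1) (iota 0 (size p).-1).

Definition ldes (p : seq nat) : nat :=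
  let n := size p in
  if n == 0 then 0
  else (find (fun i => (i.+1 == n) || (nth 0 p i > nth 0 p i.+1)) (iota 0 n)).+1.

Definition psi (d : seq nat) : seq nat :=
  let n := size d in
  let comp := [seq k <- iota 1 n | k \notin [seq x.+1 | x <- d]] in
  mkseq (fun i =>
    if (i.+1 == n) || (nth 0 d i != nth 0 d i.+1) then (nth 0 d i).+1
    else nth 0 comp (count (fun l => nth 0 d l == nth 0 d l.+1) (iota 0 i))) n.

From mathcomp Require Import all_boot zify.
Set Implicit Arguments. Unset Strict Implicit. Unset Printing Implicit Defensive.

(* Call position i of D flat when d_i = d_(i+1).  psi(D) writes d_i + 1 at the
   non-flat positions and the values missing from {d_1 + 1, ..., d_n + 1}, in
   increasing order, at the flat ones; both subsequences increase, so psi(D)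
   avoids 321.  Counting the missing values up to i shows that the flat
   positions are exactly the excedances pi_i > i, while pi_i = d_i + 1 <= i
   elsewhere.  Hence fixed points are hills, descents are the last flat
   positions of the runs of flat positions (one run per segment), and the
   first descent closes the leftmost segment.  The inverse of psi is
   d_i = min(pi_i, ..., pi_n) - 1: a 321-avoiding pi increases along the
   positions that are not suffix minima, and these are the flat positions of
   that path. *)

Lemma find_iota0_spec (P : pred nat) m :
  [/\ find P (iota 0 m) <= m,
      forall i, i < find P (iota 0 m) -> ~~ P i &
      find P (iota 0 m) < m -> P (find P (iota 0 m))].
Proof.
have le_m : find P (iota 0 m) <= m by rewrite -[X in _ <= X](size_iota 0) find_size.
split=> // [i lt_i | lt_m].
  by have := before_find 0 lt_i; rewrite nth_iota ?(leq_trans lt_i) // => ->.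
have has_P : has P (iota 0 m) by rewrite has_find size_iota.
by have := nth_find 0 has_P; rewrite nth_iota.
Qed.

Lemma find_iota0_eq (P : pred nat) m k : k <= m ->
  (forall i, i < k -> ~~ P i) -> (k < m -> P k) -> find P (iota 0 m) = k.
Proof.
move=> le_k before_k at_k; have [le_f before_f at_f] := find_iota0_spec P m.
case: (ltngtP (find P (iota 0 m)) k) => // [lt_f | lt_k].
- by move: (before_k _ lt_f); rewrite at_f //; lia.
- by move: (before_f _ lt_k); rewrite at_k //; lia.
Qed.

Lemma count_iota0_ltn (P : pred nat) i j : i < j -> P i ->
  count P (iota 0 i) < count P (iota 0 j).
Proof.
move=> lt_i Pi; have -> : j = i + (j - i).-1.+1 by lia.
by rewrite iotaD count_cat /= Pi; lia.
Qed.

Lemma count_run_starts_ends (b : pred nat) m : b m = false ->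
  count (fun i => b i && ((i == 0) || ~~ b i.-1)) (iota 0 m) =
  count (fun i => b i && ~~ b i.+1) (iota 0 m).
Proof.
suff ->: forall m, count (fun i => b i && ((i == 0) || ~~ b i.-1)) (iota 0 m) =
  count (fun i => b i && ~~ b i.+1) (iota 0 m) + [&& 0 < m, b m.-1 & b m].
  by move=> ->; rewrite !andbF addn0.
elim=> [|k IH] //; rewrite -addn1 !iotaD !count_cat {}IH /= add0n addn1.
case: k => [|k] /=; first by case: (b 0); case: (b 1) => /=; lia.
by case: (b k); case: (b k.+1); case: (b k.+2) => /=; lia.
Qed.

Lemma sorted_count_leq_nth (s : seq nat) r x : sorted leq s -> r < size s ->
  count (fun y => y <= x) s <= r -> x < nth 0 s r.
Proof.
move=> s_sorted lt_r; apply: contraTT; rewrite -leqNgt -ltnNge => le_nth.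
rewrite -(cat_take_drop r.+1 s) count_cat.
suff ->: count (fun y => y <= x) (take r.+1 s) = r.+1 by rewrite ltn_addr.
apply/eqP; rewrite -[X in _ == X](size_takel lt_r) -all_count.
apply/(all_nthP 0) => a; rewrite size_takel // => lt_a; rewrite nth_take //.
apply: leq_trans le_nth.
by apply: (sorted_leq_nth leq_trans leqnn 0 s_sorted); rewrite ?inE; lia.
Qed.

Lemma nth_map_filter_iota0 (f : nat -> nat) (P : pred nat) n i : i < n -> P i ->
  nth 0 [seq f l | l <- iota 0 n & P l] (count P (iota 0 i)) = f i.
Proof.
move=> lt_i Pi; have -> : n = i + (n - i).-1.+1 by lia.
by rewrite iotaD filter_cat map_cat nth_cat size_map size_filter ltnn subnn /= Pi.
Qed.

Definition flat (d : seq nat) i := (i.+1 < size d) && (nth 0 d i == nth 0 d i.+1).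

Definition succ_heights (d : seq nat) := [seq x.+1 | x <- d].

Definition missing (d : seq nat) :=
  [seq k <- iota 1 (size d) | k \notin succ_heights d].

Definition flat_rank (d : seq nat) i := count (flat d) (iota 0 i).

Definition last_or_run_end (d : seq nat) i :=
  (i.+1 == size d) || (flat d i && ~~ flat d i.+1).

Lemma nonflatE d i : i < size d ->
  ~~ flat d i = (i.+1 == size d) || (nth 0 d i != nth 0 d i.+1).
Proof.
move=> lt_i; rewrite negb_and -leqNgt.
by case: (ltngtP i.+1 (size d)) => //; lia.
Qed.

Lemma size_psi d : size (psi d) = size d.
Proof. exact: size_mkseq. Qed.

Lemma psi_nth d i : i < size d -> nth 0 (psi d) i =
  if flat d i then nth 0 (missing d) (flat_rank d i) else (nth 0 d i).+1.
Proof.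
move=> lt_i; rewrite nth_mkseq // -nonflatE // if_neg; case: ifP => // _.
congr (nth 0 _ _); apply: eq_in_count => l; rewrite mem_iota /flat => /andP[_ lt_l].
by rewrite (_ : l.+1 < size d) //; lia.
Qed.

Lemma psi_nth_flat d i : flat d i ->
  nth 0 (psi d) i = nth 0 (missing d) (flat_rank d i).
Proof. by move=> fl_i; rewrite psi_nth ?fl_i //; case/andP: fl_i; lia. Qed.

Lemma psi_nth_nonflat d i : i < size d -> ~~ flat d i ->
  nth 0 (psi d) i = (nth 0 d i).+1.
Proof. by move=> lt_i /negbTE nfl_i; rewrite psi_nth ?nfl_i. Qed.

Lemma missing_sorted d : sorted ltn (missing d).
Proof. exact: sorted_filter ltn_trans _ _ (iota_ltn_sorted 1 _). Qed.

Lemma size_missing d :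
  size (missing d) + count (mem (succ_heights d)) (iota 1 (size d)) = size d.
Proof. by rewrite addnC size_filter count_predC size_iota. Qed.

Lemma count_missing_leq d m : m <= size d ->
  count (fun k => k <= m) (missing d) + count (mem (succ_heights d)) (iota 1 m) = m.
Proof.
move=> le_m; rewrite count_filter -(subnKC le_m) iotaD count_cat.
rewrite [count _ (iota (1 + m) _)](eq_in_count (a2 := pred0)) ?count_pred0; last first.
  by move=> k; rewrite mem_iota /=; lia.
rewrite [count _ (iota 1 m)](eq_in_count (a2 := predC (mem (succ_heights d)))).
  by rewrite addn0 addnC count_predC size_iota.
by move=> k; rewrite mem_iota => /andP[_ lt_k]; rewrite /= (_ : k <= m) //; lia.
Qed.

Lemma lsegE d : lseg d =
  let a := find (flat d) (iota 0 (size d).-1) in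
  if a == (size d).-1 then (size d).+1
  else (find (fun j => (a <= j) && ~~ flat d j) (iota 0 (size d))).+1.
Proof.
rewrite /lseg /=.
have -> : find (fun i => nth 0 d i == nth 0 d i.+1) (iota 0 (size d).-1) =
          find (flat d) (iota 0 (size d).-1).
  apply: eq_in_find => i; rewrite mem_iota => /andP[_ lt_i].
  by rewrite /flat (_ : i.+1 < size d) //; lia.
case: eqP => // _; congr _.+1; apply: eq_in_find => j.
by rewrite mem_iota => /andP[_ lt_j]; rewrite nonflatE.
Qed.

Lemma find_last_or_run_end_noflat d : 0 < size d ->
  (forall i, i < (size d).-1 -> ~~ flat d i) ->
  find (last_or_run_end d) (iota 0 (size d)) = (size d).-1.
Proof.
move=> d_gt0 noflat; apply: find_iota0_eq => [| i lt_i | _]; first exact: leq_pred.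
  by rewrite /last_or_run_end ltn_eqF ?(negbTE (noflat i _)) //; lia.
by rewrite /last_or_run_end prednK ?eqxx.
Qed.

Lemma find_first_flat_run_end d a : flat d a -> (forall i, i < a -> ~~ flat d i) ->
  find (fun j => (a <= j) && ~~ flat d j) (iota 0 (size d)) =
  (find (last_or_run_end d) (iota 0 (size d))).+1.
Proof.
move=> fl_a before_a.
have [_ before_k at_k] := find_iota0_spec (last_or_run_end d) (size d).
set k := find _ _ in before_k at_k *; clearbody k.
have le_ak : a <= k.
  rewrite leqNgt; apply/negP => lt_ka.
  have lt_sk : k.+1 < size d by case/andP: fl_a => lt_sa _; lia.
  have := at_k (ltnW lt_sk).
  by rewrite /last_or_run_end ltn_eqF // (negbTE (before_a _ lt_ka)).
have flat_run j : a <= j -> j <= k -> flat d j.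
  elim: j => [|j IH] le_aj le_jk; first by move: le_aj; rewrite leqn0 => /eqP <-.
  have [lt_aj | <- //] : a < j.+1 \/ a = j.+1 by lia.
  have fl_j : flat d j by apply: IH; [lia | exact: ltnW].
  by move: (before_k j le_jk); rewrite /last_or_run_end fl_j negb_or negbK => /andP[].
have lt_sk : k.+1 < size d by case/andP: (flat_run k le_ak (leqnn k)).
apply: find_iota0_eq => [| j lt_j | _]; first exact: ltnW.
  by case: (leqP a j) => [le_aj | //]; rewrite flat_run.
rewrite (leq_trans le_ak (leqnSn k)) /=.
by have := at_k (ltnW lt_sk); rewrite /last_or_run_end ltn_eqF // => /andP[].
Qed.

Lemma foldr_minn_leq (x0 : nat) s x : x \in s -> foldr minn x0 s <= x.
Proof.
elim: s => //= y s IH; rewrite inE => /predU1P[-> | /IH]; first exact: geq_minl.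
exact: leq_trans (geq_minr _ _).
Qed.

Lemma foldr_minn_mem (x0 : nat) s : foldr minn x0 s \in x0 :: s.
Proof.
elim: s => [|y s IH] /=; first exact: mem_head.
rewrite /minn; case: ifP => _; first by rewrite !inE eqxx orbT.
by move: IH; rewrite !inE => /orP[-> | ->]; rewrite ?orbT.
Qed.

(* The seed p_i belongs to drop i p, so it does not change the minimum when
   i < size p. *)
Definition suffix_min (p : seq nat) i := foldr minn (nth 0 p i) (drop i p).

Definition phi (p : seq nat) := mkseq (fun i => (suffix_min p i).-1) (size p).

Lemma size_phi p : size (phi p) = size p.
Proof. exact: size_mkseq. Qed.

Lemma suffix_min_leq p i j : i <= j -> j < size p -> suffix_min p i <= nth 0 p j.
Proof.
move=> le_ij lt_j; apply: foldr_minn_leq.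
rewrite -(subnKC le_ij) -nth_drop mem_nth // size_drop.
by rewrite ltn_sub2r // (leq_ltn_trans le_ij).
Qed.

Lemma suffix_min_attained p i : i < size p ->
  exists2 k, i <= k < size p & nth 0 p k = suffix_min p i.
Proof.
move=> lt_i; have : suffix_min p i \in drop i p.
  rewrite /suffix_min; have := foldr_minn_mem (nth 0 p i) (drop i p).
  by rewrite inE => /predU1P[-> | //]; rewrite (drop_nth 0 lt_i) mem_head.
case/(nthP 0) => k; rewrite size_drop nth_drop => lt_k <-.
by exists (i + k); rewrite // leq_addr -ltn_subRL.
Qed.

Lemma is_dyckP n d :
  reflect [/\ size d = n, sorted leq d & forall i, i < size d -> nth 0 d i <= i]
          (is_dyck n d).
Proof.
apply: (iffP idP) => [/andP[/andP[/eqP size_d d_sorted] /allP d_below] | ].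
  by split=> // i lt_i; apply: d_below; rewrite mem_iota -size_d.
case=> size_d d_sorted d_below; rewrite /is_dyck size_d eqxx d_sorted.
by apply/allP => i; rewrite mem_iota -size_d => /andP[_ /d_below].
Qed.

Section DyckPath.

Variable d : seq nat.
Hypothesis d_sorted : sorted leq d.
Hypothesis d_below : forall i, i < size d -> nth 0 d i <= i.

Lemma dyck_mono i j : i <= j -> j < size d -> nth 0 d i <= nth 0 d j.
Proof.
move=> le_ij lt_j.
by apply: (sorted_leq_nth leq_trans leqnn 0 d_sorted); rewrite ?inE //; lia.
Qed.

Lemma nonflatE_lt i : i < size d ->
  ~~ flat d i = (i.+1 == size d) || (nth 0 d i < nth 0 d i.+1).
Proof.
move=> lt_i; rewrite nonflatE //.
case: (ltngtP i.+1 (size d)) => // [lt_si | ?]; last lia.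
by rewrite ltn_neqAle dyck_mono ?andbT.
Qed.

Lemma nonflat_lt i j : i < j -> j < size d -> ~~ flat d i -> nth 0 d i < nth 0 d j.
Proof.
move=> lt_ij lt_j; rewrite nonflatE_lt; last lia.
rewrite (_ : (i.+1 == size d) = false) /=; last by apply/eqP; lia.
by move/leq_trans; apply; apply: dyck_mono.
Qed.

Lemma flat_run_end j : j < size d ->
  exists t, [/\ j <= t, t < size d, ~~ flat d t & nth 0 d t = nth 0 d j].
Proof.
move=> lt_j; move: {2}(size d - j) (leqnn (size d - j)) => k.
elim: k j lt_j => [|k IH] j lt_j le_k; first lia.
have [fl_j | nfl_j] := boolP (flat d j); last by exists j.
case/andP: fl_j => lt_sj /eqP ->.
by have [|t [? ? ? ?]] := IH j.+1 lt_sj _; [lia | exists t; split => //; lia].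
Qed.

Lemma count_succ_heights_leq_nonflat :
  count (mem (succ_heights d)) (iota 1 (size d)) <=
  count (predC (flat d)) (iota 0 (size d)).
Proof.
rewrite -!size_filter -(size_map (fun t => (nth 0 d t).+1) (filter _ (iota 0 _))).
apply: uniq_leq_size; first by rewrite filter_uniq // iota_uniq.
move=> x; rewrite mem_filter => /andP[/mapP[y /(nthP 0)[j lt_j <-] ->] _].
have [t [_ lt_t nfl_t <-]] := flat_run_end lt_j.
by apply: map_f; rewrite mem_filter mem_iota /= nfl_t.
Qed.

(* The heights d_t for the non-flat t < j, together with d_j, are distinct and
   at most j. *)
Lemma count_nonflat_lt_succ_heights j : j < size d ->
  count (predC (flat d)) (iota 0 j) < count (mem (succ_heights d)) (iota 1 j.+1).
Proof.
move=> lt_j; set P := fun t => (t == j) || ~~ flat d t.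
have -> : (count (predC (flat d)) (iota 0 j)).+1 = count P (iota 0 j.+1).
  rewrite -(addn1 j) iotaD count_cat /= /P add0n eqxx addn1; congr _.+1.
  by apply: eq_in_count => t; rewrite mem_iota => /andP[_ lt_t] /=; rewrite ltn_eqF.
rewrite -!size_filter -(size_map (fun t => (nth 0 d t).+1) (filter P _)).
apply: uniq_leq_size.
  apply: (sorted_uniq ltn_trans ltnn).
  apply: (homo_sorted_in (e := ltn) (P := [pred t | (t <= j) && P t])).
  - move=> a b /andP[le_a Pa] /andP[le_b _] lt_ab; rewrite ltnS.
    apply: nonflat_lt; [done | lia |].
    by move: Pa; rewrite /P (_ : (a == j) = false) //; apply/eqP; lia.
  - by apply/allP => t; rewrite mem_filter mem_iota /= => /andP[-> ?]; lia.
  - exact: sorted_filter ltn_trans _ _ (iota_ltn_sorted 0 _).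
move=> x /mapP[t]; rewrite mem_filter mem_iota ltnS => /andP[_ le_t] ->.
have lt_t : t < size d := leq_ltn_trans le_t lt_j.
rewrite mem_filter mem_iota /= map_f ?mem_nth // add1n !ltnS.
exact: leq_trans (d_below lt_t) _.
Qed.

Lemma flat_rank_lt_size_missing j : flat d j -> flat_rank d j < size (missing d).
Proof.
move=> fl_j; have lt_sj : j.+1 < size d by case/andP: fl_j.
have := size_missing d; have := count_succ_heights_leq_nonflat.
have := count_predC (flat d) (iota 0 (size d)); rewrite size_iota.
have := count_iota0_ltn (ltnW lt_sj) fl_j; rewrite /flat_rank; lia.
Qed.

Lemma psi_flat_gt j : flat d j -> j.+1 < nth 0 (psi d) j.
Proof.
move=> fl_j; have lt_sj : j.+1 < size d by case/andP: fl_j.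
rewrite psi_nth_flat //; apply: sorted_count_leq_nth.
- by have := missing_sorted d; rewrite ltn_sorted_uniq_leq => /andP[].
- exact: flat_rank_lt_size_missing.
have := count_missing_leq (ltnW lt_sj).
have := count_nonflat_lt_succ_heights (ltnW lt_sj).
have := count_predC (flat d) (iota 0 j); rewrite size_iota /flat_rank; lia.
Qed.

Lemma psi_lt_same_flatness a b : a < b -> b < size d -> flat d a = flat d b ->
  nth 0 (psi d) a < nth 0 (psi d) b.
Proof.
move=> lt_ab lt_b; have [fl_a /esym fl_b | nfl_a /esym/negbT nfl_b] := boolP (flat d a).
- rewrite !psi_nth_flat //; apply: (sorted_ltn_nth ltn_trans 0 (missing_sorted d)).
  + exact: flat_rank_lt_size_missing.
  + exact: flat_rank_lt_size_missing.
  + exact: count_iota0_ltn.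
- by rewrite !psi_nth_nonflat ?ltnS ?nonflat_lt //; lia.
Qed.

Lemma psi_mem_succ_heights i : i < size d ->
  (nth 0 (psi d) i \in succ_heights d) = ~~ flat d i.
Proof.
move=> lt_i; have [fl_i | nfl_i] := boolP (flat d i); last first.
  by rewrite psi_nth_nonflat // map_f ?mem_nth.
rewrite psi_nth_flat //; apply/negbTE.
have := mem_nth 0 (flat_rank_lt_size_missing fl_i).
by rewrite mem_filter => /andP[].
Qed.

Lemma psi_uniq : uniq (psi d).
Proof.
have psi_neq a b : a < b -> b < size d -> nth 0 (psi d) a != nth 0 (psi d) b.
  move=> lt_ab lt_b; have [eq_fl | ne_fl] := eqVneq (flat d a) (flat d b).
    by rewrite neq_ltn psi_lt_same_flatness.
  apply: contra_neq ne_fl => eq_psi; apply: negb_inj.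
  by rewrite -!psi_mem_succ_heights ?eq_psi //; lia.
apply/(uniqP 0) => a b; rewrite !inE size_psi => lt_a lt_b.
case: (ltngtP a b) => // [lt_ab | lt_ba] eq_ab.
- by have := psi_neq _ _ lt_ab lt_b; rewrite eq_ab eqxx.
- by have := psi_neq _ _ lt_ba lt_a; rewrite eq_ab eqxx.
Qed.

Lemma psi_perm : is_perm (size d) (psi d).
Proof.
apply: uniq_perm psi_uniq (iota_uniq _ _) _.
apply: (uniq_min_size psi_uniq _ _).2; last by rewrite size_iota size_psi.
move=> x /(nthP 0)[i]; rewrite size_psi mem_iota => lt_i <-.
have [fl_i | nfl_i] := boolP (flat d i).
  rewrite psi_nth_flat //.
  have := mem_nth 0 (flat_rank_lt_size_missing fl_i).
  by rewrite mem_filter mem_iota => /andP[].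
by rewrite psi_nth_nonflat //= add1n !ltnS (leq_ltn_trans (d_below lt_i)).
Qed.

Lemma psi_avoids321 : avoids321 (psi d).
Proof.
move=> [i [j [l [lt_ij lt_jl lt_l gt_ij gt_jl]]]]; rewrite size_psi in lt_l.
have lt_j : j < size d by lia.
have [eq_ij | ne_ij] := eqVneq (flat d i) (flat d j).
  by have := psi_lt_same_flatness lt_ij lt_j eq_ij; lia.
have [eq_jl | ne_jl] := eqVneq (flat d j) (flat d l).
  by have := psi_lt_same_flatness lt_jl lt_l eq_jl; lia.
have eq_il : flat d i = flat d l by move: ne_ij ne_jl; do 3!case: (flat d _).
by have := psi_lt_same_flatness (ltn_trans lt_ij lt_jl) lt_l eq_il; lia.
Qed.

Lemma psi_descentE i : i.+1 < size d ->
  (nth 0 (psi d) i.+1 < nth 0 (psi d) i) = flat d i && ~~ flat d i.+1.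
Proof.
move=> lt_si; have lt_i : i < size d by lia.
have same_lt := psi_lt_same_flatness (ltnSn i) lt_si.
have [fl_i | nfl_i] := boolP (flat d i); have [fl_si | nfl_si] := boolP (flat d i.+1).
- by apply/negbTE; rewrite -leqNgt ltnW ?same_lt ?fl_i ?fl_si.
- rewrite (psi_nth_nonflat lt_si nfl_si) -(eqP (proj2 (andP fl_i))).
  by have := psi_flat_gt fl_i; have := d_below lt_i; lia.
- rewrite (psi_nth_nonflat lt_i nfl_i).
  by have := psi_flat_gt fl_si; have := d_below lt_i; lia.
- by apply/negbTE; rewrite -leqNgt ltnW ?same_lt ?(negbTE nfl_i) ?(negbTE nfl_si).
Qed.

Lemma hill_fixp : hill d = fixp (psi d).
Proof.
rewrite /hill /fixp size_psi; apply: eq_in_count => i.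
rewrite mem_iota => /andP[_ lt_i].
rewrite -nonflatE_lt //; have [fl_i | nfl_i] := boolP (flat d i).
  by rewrite andbF; apply/esym/eqP; have := psi_flat_gt fl_i; lia.
by rewrite psi_nth_nonflat // eqSS andbT.
Qed.

Lemma seg_des : seg d = des (psi d).
Proof.
rewrite /seg /des size_psi.
have flat_eq i : i.+1 < size d -> (nth 0 d i == nth 0 d i.+1) = flat d i.
  by rewrite /flat => ->.
transitivity
  (count (fun i => flat d i && ((i == 0) || ~~ flat d i.-1)) (iota 0 (size d).-1)).
  apply: eq_in_count => i; rewrite mem_iota => /andP[_ lt_i] /=.
  rewrite flat_eq; last lia.
  by case: i lt_i => //= i lt_i; rewrite flat_eq //; lia.
rewrite count_run_starts_ends; last by apply/negbTE; rewrite negb_and -leqNgt; lia.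
apply: eq_in_count => i; rewrite mem_iota => /andP[_ lt_i].
by rewrite psi_descentE //; lia.
Qed.

Lemma ldes_psiE : ldes (psi d) =
  if size d == 0 then 0
  else (find (last_or_run_end d) (iota 0 (size d))).+1.
Proof.
rewrite /ldes size_psi; case: eqP => // _; congr _.+1; apply: eq_in_find => i.
rewrite mem_iota /last_or_run_end => /andP[_ lt_i].
by case: (ltngtP i.+1 (size d)) => [lt_si | ? | _] //=; [rewrite psi_descentE | lia].
Qed.

Lemma lseg_ldes : lseg d = (ldes (psi d)).+1.
Proof.
rewrite lsegE ldes_psiE /=.
have [le_a before_a at_a] := find_iota0_spec (flat d) (size d).-1.
case: eqP => [eq_a | /eqP ne_a].
  have [-> // | d_gt0] := posnP (size d).
  rewrite find_last_or_run_end_noflat ?prednK // => i.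
  by rewrite -eq_a; apply: before_a.
have lt_a : find (flat d) (iota 0 (size d).-1) < (size d).-1.
  by rewrite ltn_neqAle ne_a le_a.
rewrite gtn_eqF; last exact: leq_ltn_trans (leq0n _) (leq_trans lt_a (leq_pred _)).
by rewrite find_first_flat_run_end ?at_a.
Qed.

Lemma psi_nth_gt_height i j : i <= j -> j < size d -> nth 0 d i < nth 0 (psi d) j.
Proof.
move=> le_ij lt_j; have [fl_j | nfl_j] := boolP (flat d j).
  by have := psi_flat_gt fl_j; have := d_below (leq_ltn_trans le_ij lt_j); lia.
by rewrite psi_nth_nonflat // ltnS dyck_mono.
Qed.

Lemma suffix_min_psi i : i < size d -> suffix_min (psi d) i = (nth 0 d i).+1.
Proof.
move=> lt_i; apply/eqP; rewrite eqn_leq; apply/andP; split.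
  have [t [le_it lt_t nfl_t <-]] := flat_run_end lt_i.
  by rewrite -psi_nth_nonflat // suffix_min_leq ?size_psi.
have lt_i' : i < size (psi d) by rewrite size_psi.
have [k /andP[le_ik lt_k] <-] := suffix_min_attained lt_i'.
by rewrite psi_nth_gt_height // -(size_psi d).
Qed.

Lemma phi_psi : phi (psi d) = d.
Proof.
apply: (@eq_from_nth _ 0); rewrite size_phi size_psi // => i lt_i.
by rewrite nth_mkseq ?size_psi // suffix_min_psi.
Qed.

End DyckPath.

Section Perm321.

Variables (n : nat) (p : seq nat).
Hypothesis p_perm : perm_eq p (iota 1 n).

Lemma size_perm : size p = n.
Proof. by rewrite (perm_size p_perm) size_iota. Qed.

Lemma perm_nth_range j : j < size p -> 0 < nth 0 p j <= n.
Proof. by move=> lt_j; have := mem_nth 0 lt_j; rewrite (perm_mem p_perm) mem_iota. Qed.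

Lemma perm_nth_inj a b : a < size p -> b < size p -> nth 0 p a = nth 0 p b -> a = b.
Proof.
move=> lt_a lt_b /eqP; rewrite nth_uniq ?(perm_uniq p_perm) ?iota_uniq //.
by move/eqP.
Qed.

Lemma suffix_min_gt0 i : i < size p -> 0 < suffix_min p i.
Proof.
case/suffix_min_attained => k /andP[_ lt_k] <-.
by have /andP[] := perm_nth_range lt_k.
Qed.

Lemma suffix_min_mono i j : i <= j -> j < size p -> suffix_min p i <= suffix_min p j.
Proof.
move=> le_ij lt_j; have [k /andP[le_jk lt_k] <-] := suffix_min_attained lt_j.
exact: suffix_min_leq (leq_trans le_ij le_jk) lt_k.
Qed.

Lemma suffix_min_leq_succ i : i < size p -> suffix_min p i <= i.+1.
Proof.
move=> lt_i; rewrite leqNgt; apply/negP => gt_i.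
have : size (drop i p) <= size (iota i.+2 (n - i.+1)).
  apply: uniq_leq_size; first by rewrite drop_uniq // (perm_uniq p_perm) iota_uniq.
  move=> x x_in; have le_x : suffix_min p i <= x := foldr_minn_leq _ x_in.
  have := mem_drop x_in; rewrite (perm_mem p_perm) !mem_iota; lia.
by rewrite size_drop size_iota size_perm; rewrite size_perm in lt_i; lia.
Qed.

Lemma phi_dyck : is_dyck n (phi p).
Proof.
rewrite /is_dyck size_phi size_perm eqxx /=; apply/andP; split.
  apply/(sortedP 0) => i; rewrite size_phi => lt_si.
  by rewrite !nth_mkseq ?(ltnW lt_si) // -!subn1 leq_sub2r // suffix_min_mono.
apply/allP => i; rewrite mem_iota -size_perm => /andP[_ lt_i].
by rewrite nth_mkseq //; have := suffix_min_leq_succ lt_i; lia.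
Qed.

Lemma flat_phi i : i < size p ->
  flat (phi p) i = (i.+1 < size p) && (suffix_min p i == suffix_min p i.+1).
Proof.
move=> lt_i; rewrite /flat size_phi; case: ltnP => //= lt_si.
rewrite !nth_mkseq ?(ltnW lt_si) //.
have := suffix_min_gt0 lt_i; have := suffix_min_gt0 lt_si.
by move=> ? ?; apply/eqP/eqP; lia.
Qed.

Lemma nth_eq_suffix_min i : i < size p -> ~~ flat (phi p) i ->
  nth 0 p i = suffix_min p i.
Proof.
move=> lt_i nfl_i; have [k /andP[le_ik lt_k] eq_k] := suffix_min_attained lt_i.
move: le_ik; rewrite leq_eqVlt => /predU1P[eq_ik | lt_ik]; first by rewrite -eq_k eq_ik.
have lt_si : i.+1 < size p := leq_ltn_trans lt_ik lt_k.
have eq_sm : suffix_min p i == suffix_min p i.+1.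
  by rewrite eqn_leq suffix_min_mono // -[X in _ <= X]eq_k suffix_min_leq.
by move: nfl_i; rewrite flat_phi // lt_si eq_sm.
Qed.

Lemma suffix_min_lt_flat i : flat (phi p) i -> suffix_min p i < nth 0 p i.
Proof.
move=> fl_i.
have lt_si : i.+1 < size p by move: fl_i; rewrite /flat size_phi => /andP[].
move: fl_i; rewrite flat_phi ?(ltnW lt_si) // => /andP[_ /eqP eq_sm].
have [k /andP[lt_ik lt_k] eq_k] := suffix_min_attained lt_si.
have le_ki : nth 0 p k <= nth 0 p i by rewrite eq_k -eq_sm suffix_min_leq // ltnW.
have ne_ki : nth 0 p k != nth 0 p i.
  apply/eqP => /(perm_nth_inj lt_k (ltnW lt_si)) eq_ki.
  by move: lt_ik; rewrite eq_ki ltnn.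
by rewrite eq_sm -eq_k ltn_neqAle ne_ki le_ki.
Qed.

Lemma succ_heights_phi :
  succ_heights (phi p) = [seq suffix_min p j | j <- iota 0 (size p)].
Proof.
rewrite /succ_heights /phi /mkseq -map_comp; apply/eq_in_map => j.
by rewrite mem_iota => /andP[_ lt_j] /=; rewrite prednK ?suffix_min_gt0.
Qed.

Hypothesis p_avoids : avoids321 p.

Lemma flat_phi_increasing l l' : l < l' -> flat (phi p) l' -> nth 0 p l < nth 0 p l'.
Proof.
move=> lt_ll' fl_l'.
have lt_sl' : l'.+1 < size p by move: fl_l'; rewrite /flat size_phi => /andP[].
have lt_l' := ltnW lt_sl'.
have [k /andP[lt_l'k lt_k] eq_k] := suffix_min_attained lt_sl'.
have lt_kl' : nth 0 p k < nth 0 p l'.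
  move: (fl_l'); rewrite flat_phi // eq_k => /andP[_ /eqP <-].
  exact: suffix_min_lt_flat.
rewrite ltnNge leq_eqVlt negb_or; apply/andP; split.
  apply/eqP => /(perm_nth_inj lt_l' (ltn_trans lt_ll' lt_l')) eq_l.
  by move: lt_ll'; rewrite eq_l ltnn.
(* p_k < p_l' with l' < k, so p_l > p_l' would complete a 321 pattern. *)
by apply/negP => lt_l'l; apply: p_avoids; exists l, l', k; split.
Qed.

Lemma missing_phi :
  missing (phi p) = [seq nth 0 p l | l <- iota 0 (size p) & flat (phi p) l].
Proof.
apply: (irr_sorted_eq ltn_trans ltnn (missing_sorted _)).
  apply: (homo_sorted_in (e := ltn) (P := flat (phi p))).
  - by move=> a b _ fl_b lt_ab; apply: flat_phi_increasing.
  - by apply/allP => l; rewrite mem_filter => /andP[].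
  - exact: sorted_filter ltn_trans _ _ (iota_ltn_sorted 0 _).
move=> x; rewrite mem_filter size_phi succ_heights_phi; apply/andP/mapP.
  case=> x_new; rewrite [X in iota 1 X]size_perm -(perm_mem p_perm).
  case/(nthP 0) => l lt_l eq_x.
  exists l; last by rewrite eq_x.
  have l_in : l \in iota 0 (size p) by rewrite mem_iota.
  rewrite mem_filter l_in andbT; apply: contraR x_new => nfl_l.
  by apply/mapP; exists l; rewrite // -eq_x nth_eq_suffix_min.
case=> l; rewrite mem_filter mem_iota => /andP[fl_l /andP[_ lt_l]] ->.
rewrite [X in iota 1 X]size_perm -(perm_mem p_perm) mem_nth //; split => //.
apply/mapP => [[j]]; rewrite mem_iota => /andP[_ lt_j] eq_j.
have [k /andP[le_jk lt_k] eq_k] := suffix_min_attained lt_j.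
have eq_kl : k = l by apply: perm_nth_inj => //; rewrite eq_k eq_j.
have le_jl : j <= l by rewrite -eq_kl.
have := suffix_min_mono le_jl lt_l; have := suffix_min_lt_flat fl_l.
by rewrite -eq_j; lia.
Qed.

Lemma psi_phi : psi (phi p) = p.
Proof.
apply: (@eq_from_nth _ 0); rewrite size_psi size_phi // => i lt_i.
have [fl_i | nfl_i] := boolP (flat (phi p) i).
  by rewrite psi_nth_flat // missing_phi /flat_rank nth_map_filter_iota0.
rewrite psi_nth_nonflat ?size_phi // nth_mkseq // prednK ?suffix_min_gt0 //.
by rewrite nth_eq_suffix_min.
Qed.

End Perm321.

Theorem lemma4p4 (n : nat) :
  (forall D, is_dyck n D -> is_perm321 n (psi D)) /\
  (forall D1 D2, is_dyck n D1 -> is_dyck n D2 -> psi D1 = psi D2 -> D1 = D2) /\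
  (forall p, is_perm321 n p -> exists D, is_dyck n D /\ psi D = p) /\
  (forall D, is_dyck n D ->
     (hill D, seg D, lseg D) = (fixp (psi D), des (psi D), (ldes (psi D)).+1)).
Proof.
split; last split; last split.
- move=> D /is_dyckP[<- D_sorted D_below].
  by split; [exact: psi_perm | exact: psi_avoids321].
- move=> D1 D2 /is_dyckP[_ D1_sorted D1_below] /is_dyckP[_ D2_sorted D2_below] eq_psi.
  by rewrite -(phi_psi D1_sorted D1_below) eq_psi phi_psi.
- move=> p [p_perm p_avoids]; exists (phi p).
  by split; [exact: phi_dyck p_perm | exact: psi_phi p_perm p_avoids].
- move=> D /is_dyckP[_ D_sorted D_below].
  by rewrite hill_fixp // seg_des // lseg_ldes.
Qed.
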